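(* Let $n>(p+s)^4$ be an integer. For any $i \in \{1,2,\ldots,p-1+s\}$ and any $k \in \{1,2,\ldots,n\}$, we have $\Phi_{n}^{-1} d_n^{p-1+s-i} r_{i,k} \in \mathbb{Z}$, where \[\Phi_{n} := \prod_{\substack{\sqrt{pn} < q \leqslant n \\ q~\text{prime}}} q^{\phi\left( n/q \right)},\qquad \phi(x) := \begin{cases} 0, & \{x\} \in \left[0,\frac{2}{p}\right), \\ j-1, & \{x\} \in \left[\frac{j}{p},\frac{j+1}{p}\right),\ j=2,3,\ldots,p-1,\end{cases}\] and $\{x\}=x-\lfloor x\rfloor$.
   Context: Let $p\geqslant 5$ be a prime and $s$ a positive integer. Write $v_p$ for the $p$-adic valuation, $(\alpha)_k=\alpha(\alpha+1)\cdots(\alpha+k-1)$, and $d_n=\operatorname{LCM}\{1,2,\ldots,n\}$. Put $N_0=v_p(p-1+s)$ and $M_0=p^{2+N_0}s-1$. For an integer $n>(p+s)^4$ let \[R_n(t)=p^{pn}\, n!^s\, t^{M_0}\,\frac{\prod_{j=1}^{p-1}(t+\frac{j}{p})_n}{(t)_{n+1}^{p-1+s}}\in\mathbb{Q}(t),\] with partial fraction decomposition $R_n(t)=\sum_{i=1}^{p-1+s}\sum_{k=1}^{n} r_{i,k}(t+k)^{-i}$, $r_{i,k}\in\mathbb{Q}$. *)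

From mathcomp Require Import all_boot all_order all_algebra.
Set Implicit Arguments. Unset Strict Implicit. Unset Printing Implicit Defensive.
Import Order.TTheory GRing.Theory Num.Theory.
Local Open Scope ring_scope.

Definition poch (a : rat) (k : nat) : rat := \prod_(i < k) (a + i%:R).

Definition dn (n : nat) : nat := \big[lcmn/1%N]_(1 <= j < n.+1) j.

Definition N0 (p s : nat) : nat := logn p (p - 1 + s).
Definition M0 (p s : nat) : nat := (p ^ (2 + N0 p s) * s - 1)%N.

Definition Rn (p s n : nat) (t : rat) : rat :=
  (p ^ (p * n))%:R * (n`! ^ s)%:R * t ^+ M0 p s
  * (\prod_(1 <= j < p) poch (t + j%:R / p%:R) n)
  / (poch t n.+1) ^+ (p - 1 + s).

Definition fracq (x : rat) : rat := x - (Num.floor x)%:~R.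

(* phi(x) = 0 if {x} in [0,2/p), j-1 if {x} in [j/p,(j+1)/p), j = 2..p-1.
   Here j = floor(p {x}) is the unique j with {x} in [j/p,(j+1)/p). *)
Definition phi (p : nat) (x : rat) : nat :=
  let j := Num.floor (p%:R * fracq x) in
  if (j < 2)%R then 0%N else `|j - 1|%N.

(* Phi_n = prod over primes q with sqrt(pn) < q <= n of q^phi(n/q);
   sqrt(pn) < q is written as p n < q^2. *)
Definition Phin (p n : nat) : nat :=
  \prod_(q < n.+1 | prime q && (p * n < q ^ 2)%N) (q : nat) ^ phi p (n%:R / q%:R).

From Pilot Require Import Defs.
From mathcomp Require Import all_boot all_order all_algebra.
From mathcomp Require Import zify ring.
Import Order.TTheory GRing.Theory Num.Theory.
Set Implicit Arguments. Unset Strict Implicit. Unset Printing Implicit Defensive.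

(* Fix k, put x = t + k and P = p - 1 + s. Multiplying the partial fraction expansion by
   (t)_(n+1)^P turns R_n into a polynomial N(x) whose coefficients of degree < P only come
   from the pole at t = -k: N = sum_i r_(i,k) x^(P-i) H + O(x^P), H = prod_(l <> k) (x + l - k)^P.
   Hence r_(P-m,k) is the m-th coefficient of the power series N / H, and it suffices that
   H / H(0) and N / (H(0) Phi_n) become integral after x := d_n x, since long division by a
   series with constant term 1 preserves this. For H each factor is 1 + x / (l - k). N is a
   constant C times the integral forms (p/g) x + (j + p (l - k))/g, g = gcd(|j + p (l - k)|, d_n),
   and H(0) Phi_n = +-(k! (n-k)!)^P Phi_n divides C by a count of q-adic valuations:
   floor(p a / q^e) >= p floor(a / q^e), and for a = k, n - k the terms e = 1 leave room for
   phi(n/q). *)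

Lemma dvdn_logn_le a b : 0 < a -> 0 < b ->
  (forall q, prime q -> logn q a <= logn q b) -> a %| b.
Proof.
move=> a_gt0 b_gt0 le_ab; apply/dvdn_partP => // q.
by rewrite mem_primes => /andP[q_pr _]; rewrite p_part pfactor_dvdn // le_ab.
Qed.

Lemma logn_prod q (I : Type) (r : seq I) (P : pred I) (F : I -> nat) :
  (forall i, P i -> 0 < F i) ->
  logn q (\prod_(i <- r | P i) F i) = \sum_(i <- r | P i) logn q (F i).
Proof.
move=> F_gt0; elim: r => [|x r IHr]; first by rewrite !big_nil logn1.
rewrite !big_cons; case: ifP => // Px.
by rewrite lognM ?IHr ?F_gt0 // prodn_cond_gt0.
Qed.

Lemma sum_indicator_leq (P : pred nat) E L :
  (forall e, P e -> e <= L) -> \sum_(1 <= e < E) P e <= L.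
Proof.
move=> PL; apply: leq_trans (_ : \sum_(1 <= e < E) (e <= L) <= L).
  by apply: leq_sum => e _; case: (P e) (PL e) => // ->.
case: E => [|E]; first by rewrite big_geq.
suff -> : \sum_(1 <= e < E.+1) (e <= L) = minn E L by rewrite geq_minr.
elim: E => [|E IHE]; first by rewrite big_geq // min0n.
by rewrite big_nat_recr //= IHE; case: leqP => ?; lia.
Qed.

Lemma logn_fact_trunc q k n E : prime q -> k <= n -> n < E ->
  logn q k`! = \sum_(1 <= e < E) (q ^ e <= n) * (k %/ q ^ e).
Proof.
move=> q_pr le_kn lt_nE; have q_gt1 := prime_gt1 q_pr.
transitivity (\sum_(1 <= e < E) k %/ q ^ e); last first.
  apply: eq_bigr => e _; case: leqP => [_|lt_n_qe]; first by rewrite mul1n.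
  by rewrite mul0n divn_small // (leq_ltn_trans le_kn).
rewrite logn_fact // [RHS](big_cat_nat _ (n := k.+1)) //=; last exact: leq_trans lt_nE.
rewrite [X in _ = _ + X]big1_seq ?addn0 // => e /andP[_].
rewrite mem_index_iota => /andP[lt_ke _]; apply: divn_small.
exact: leq_trans lt_ke (ltnW (ltn_expl e q_gt1)).
Qed.

Definition gcd_prod d N := \prod_(1 <= b < N.+1) gcdn b d.

Lemma gcd_prod_gt0 d N : 0 < d -> 0 < gcd_prod d N.
Proof. by move=> d_gt0; rewrite prodn_gt0 // => b; rewrite gcdn_gt0 d_gt0 orbT. Qed.

Lemma logn_gcd_prod q d N n E : prime q -> 0 < d ->
  (forall e, q ^ e <= n -> q ^ e %| d) ->
  \sum_(1 <= e < E) (q ^ e <= n) * (N %/ q ^ e) <= logn q (gcd_prod d N).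
Proof.
move=> q_pr d_gt0 qe_d; have gcd_gt0 b : 0 < gcdn b d by rewrite gcdn_gt0 d_gt0 orbT.
rewrite /gcd_prod logn_prod //.
apply: leq_trans (_ : _ <= \sum_(1 <= b < N.+1)
  \sum_(1 <= e < E) ((q ^ e <= n) && (q ^ e %| b))) _; last first.
  apply: leq_sum => b _; apply: sum_indicator_leq => e /andP[le_qe_n qe_b].
  by rewrite -pfactor_dvdn // dvdn_gcd qe_b qe_d.
rewrite exchange_big_nat /=; apply: leq_sum => e _.
rewrite divn_count_dvd big_distrr /=; apply: leq_sum => b _.
by case: (q ^ e <= n); case: (q ^ e %| b).
Qed.

Lemma logn_Phin q p n : prime q ->
  logn q (Phin p n) = if (q <= n) && (p * n < q ^ 2) then phi p (n%:R / q%:R)%R else 0.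
Proof.
move=> q_pr; rewrite /Phin logn_prod; last first.
  by move=> i /andP[i_pr _]; rewrite expn_gt0 prime_gt0.
under eq_bigr => i /andP[i_pr _] do rewrite lognX logn_prime //.
case: ifP => [/andP[le_qn lt_pn_q2]|not_q].
  rewrite (bigD1 (Ordinal (le_qn : q < n.+1))) /= ?q_pr ?lt_pn_q2 //= eqxx muln1.
  rewrite big1 ?addn0 // => i /andP[_ ne_iq]; rewrite eq_sym.
  by move: ne_iq; rewrite -val_eqE /= => /negPf ->; rewrite muln0.
apply/eqP; rewrite sum_nat_eq0; apply/forallP => i; apply/implyP => /andP[_ lt_pn_i2].
case: (q =P i) => [eq_qi|]; last by rewrite muln0.
by move: not_q; rewrite eq_qi lt_pn_i2 -ltnS ltn_ord.
Qed.

Lemma Phin_gt0 p n : 0 < Phin p n.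
Proof. by rewrite prodn_cond_gt0 // => q /andP[q_pr _]; rewrite expn_gt0 prime_gt0. Qed.

Section RatioFloor.
Local Open Scope ring_scope.

Lemma ratio_nat_divn a q : (0 < q)%N ->
  (a%:R / q%:R : rat) = (a %/ q)%:R + (a %% q)%:R / q%:R.
Proof.
move=> q_gt0; have q_neq0 : (q%:R : rat) != 0 by rewrite pnatr_eq0 -lt0n.
by rewrite {1}(divn_eq a q) natrD natrM mulrDl mulfK.
Qed.

Lemma floor_ratio_nat a q : (0 < q)%N -> Num.floor (a%:R / q%:R : rat) = (a %/ q)%:Z.
Proof.
move=> q_gt0; apply: floor_def; rewrite intrD -[((a %/ q)%:Z)%:~R]/((a %/ q)%:R).
rewrite ratio_nat_divn // lerDl divr_ge0 ?ler0n //= ltrD2l.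
by rewrite ltr_pdivrMr ?ltr0n // mul1r ltr_nat ltn_mod.
Qed.

Lemma phi_ratio_nat p n q : (0 < q)%N ->
  phi p (n%:R / q%:R) = ((p * (n %% q)) %/ q).-1.
Proof.
move=> q_gt0; rewrite /phi /Defs.fracq floor_ratio_nat // ratio_nat_divn //.
rewrite -[((n %/ q)%:Z)%:~R]/((n %/ q)%:R) addrAC subrr add0r mulrA -natrM.
rewrite floor_ratio_nat // ltz_nat.
case: ltnP => [|le2]; first by case: (_ %/ _)%N => [|[]].
by rewrite -subn1 subzn ?(leq_trans _ le2).
Qed.

End RatioFloor.

Lemma floor_add_phi_le p n k q : 0 < q -> k <= n ->
  p * (k %/ q) + p * ((n - k) %/ q) + phi p (n%:R / q%:R)%R
  <= (p * k) %/ q + (p * (n - k)) %/ q.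
Proof.
move=> q_gt0 le_kn; rewrite phi_ratio_nat //.
have divn_mul m : (p * m) %/ q = p * (m %/ q) + (p * (m %% q)) %/ q.
  by rewrite {1}(divn_eq m q) mulnDr mulnA divnMDl.
rewrite (divn_mul k) (divn_mul (n - k)).
have le_mod : n %% q <= k %% q + (n - k) %% q.
  by have := leq_mod (k %% q + (n - k) %% q) q; rewrite modnDm subnKC.
have : (p * (n %% q)) %/ q <= (p * (k %% q)) %/ q + (p * ((n - k) %% q)) %/ q + 1.
  apply: leq_trans (leq_divDl _ _ _); apply: leq_div2r.
  by rewrite -mulnDr leq_mul2l le_mod orbT.
move: (p * (n %% q) %/ q) (p * (k %% q) %/ q) (p * ((n - k) %% q) %/ q).
by move: (p * (k %/ q)) (p * ((n - k) %/ q)) => x y j a b; lia.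
Qed.

Lemma dn_gt0 n : 0 < dn n.
Proof.
elim: n => [|n IHn]; first by rewrite /dn big_geq.
by rewrite /dn big_nat_recr //= lcmn_gt0 IHn.
Qed.

Lemma dvdn_dn n c : 0 < c -> c <= n -> c %| dn n.
Proof.
elim: n => [|n IHn] c_gt0 le_cn; first by move: c_gt0 le_cn; case: c.
rewrite /dn big_nat_recr //=; case: (ltngtP c n.+1) => [lt_cn||->].
- exact: dvdn_trans (IHn c_gt0 lt_cn) (dvdn_lcml _ _).
- by rewrite ltnNge le_cn.
- exact: dvdn_lcmr.
Qed.

Lemma leq_mul_divn p m q : 0 < q -> p * (m %/ q) <= (p * m) %/ q.
Proof. by move=> q_gt0; rewrite leq_divRL // -mulnA leq_mul2l leq_divM orbT. Qed.

Lemma logn_fact_Phin_le p n k q : prime q -> k <= n ->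
  logn q ((k`! * (n - k)`!) ^ p * Phin p n)
  <= logn q (gcd_prod (dn n) (p * k) * gcd_prod (dn n) (p * (n - k))).
Proof.
move=> q_pr le_kn; have q_gt0 := prime_gt0 q_pr.
have qe_dn e : q ^ e <= n -> q ^ e %| dn n by apply: dvdn_dn; rewrite expn_gt0 q_gt0.
rewrite lognM ?expn_gt0 ?muln_gt0 ?fact_gt0 ?Phin_gt0 // lognX lognM ?fact_gt0 //.
rewrite lognM ?gcd_prod_gt0 ?dn_gt0 //.
rewrite (logn_fact_trunc q_pr le_kn (ltnSn n)).
rewrite (logn_fact_trunc q_pr (leq_subr k n) (ltnSn n)).
apply: leq_trans (leq_add (logn_gcd_prod (p * k) n.+1 q_pr (dn_gt0 n) qe_dn)
                          (logn_gcd_prod (p * (n - k)) n.+1 q_pr (dn_gt0 n) qe_dn)).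
rewrite mulnDr !big_distrr -!big_split /=.
rewrite logn_Phin //.
pose A e := p * ((q ^ e <= n) * (k %/ q ^ e)) + p * ((q ^ e <= n) * ((n - k) %/ q ^ e)).
pose B e := (q ^ e <= n) * ((p * k) %/ q ^ e) + (q ^ e <= n) * ((p * (n - k)) %/ q ^ e).
have le_AB e : A e <= B e.
  rewrite /A /B; case: (q ^ e <= n); rewrite ?mul0n ?muln0 // !mul1n.
  by rewrite leq_add ?leq_mul_divn ?expn_gt0 ?q_gt0.
have le_AB1 : q <= n -> A 1 + phi p (n%:R / q%:R)%R <= B 1.
  by move=> le_qn; rewrite /A /B !expn1 le_qn !mul1n floor_add_phi_le.
case: ifP => [/andP[le_qn _]|_]; last first.
  by rewrite addn0; apply: leq_sum => e _; apply: le_AB.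
have lt1n : 1 < n.+1 by rewrite ltnS (leq_trans q_gt0 le_qn).
rewrite !(big_ltn lt1n) addnAC.
by rewrite leq_add ?le_AB1 //; apply: leq_sum => e _; apply: le_AB.
Qed.

Lemma fact_Phin_dvdn_gcd_prod p n k : k <= n ->
  (k`! * (n - k)`!) ^ p * Phin p n
  %| gcd_prod (dn n) (p * k) * gcd_prod (dn n) (p * (n - k)).
Proof.
move=> le_kn; apply: dvdn_logn_le => [||q q_pr]; last exact: logn_fact_Phin_le.
  by rewrite muln_gt0 expn_gt0 muln_gt0 !fact_gt0 Phin_gt0.
by rewrite muln_gt0 !gcd_prod_gt0 ?dn_gt0.
Qed.

Definition gcd_prod_skip p d M := \prod_(m < M) \prod_(1 <= j < p) gcdn (p * m + j) d.

Lemma gcd_prod_dvdn p d M : 0 < p ->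
  gcd_prod d (p * M) %| gcd_prod_skip p d M * (p ^ M * M`!).
Proof.
move=> p_gt0; elim: M => [|M IHM]; first by rewrite muln0 /gcd_prod big_geq.
have gcd_prodS : gcd_prod d (p * M.+1) =
    gcd_prod d (p * M) * \prod_(1 <= j < p) gcdn (p * M + j) d * gcdn (p * M.+1) d.
  rewrite /gcd_prod (big_cat_nat _ (n := (p * M).+1)) //=; last by rewrite ltnS leq_pmul2l.
  rewrite -mulnA; congr (_ * _); rewrite mulnS big_nat_recr /=; last by lia.
  rewrite -[(p * M).+1]add1n big_addn addnK.
  by congr (_ * _); apply: eq_bigr => j; rewrite addnC.
rewrite gcd_prodS /gcd_prod_skip big_ord_recr /= expnS factS.
have -> : \prod_(i < M) \prod_(1 <= j < p) gcdn (p * i + j) d *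
    \prod_(1 <= j < p) gcdn (p * M + j) d * (p * p ^ M * (M.+1 * M`!)) =
  gcd_prod_skip p d M * (p ^ M * M`!) * \prod_(1 <= j < p) gcdn (p * M + j) d * (p * M.+1).
  by rewrite /gcd_prod_skip; ring.
by rewrite !dvdn_mul ?dvdn_gcdl.
Qed.

(* [abs_shift p k j l] is |j + p (l - k)|, for 0 <= j <= p. *)
Definition abs_shift p k j l := if l < k then p * (k - l) - j else j + p * (l - k).

Lemma prod_gcd_abs_shift p n k d : k <= n ->
  \prod_(1 <= j < p) \prod_(0 <= l < n) gcdn (abs_shift p k j l) d =
  gcd_prod_skip p d k * gcd_prod_skip p d (n - k).
Proof.
move=> le_kn; rewrite exchange_big_nat /= (big_cat_nat _ (n := k)) //=.
congr (_ * _).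
  rewrite big_nat_rev /= /gcd_prod_skip big_mkord; apply: eq_bigr => -[l lt_lk] _ /=.
  rewrite add0n big_nat_rev /=; apply: eq_big_nat => j /andP[j_ge1 lt_jp].
  rewrite /abs_shift (_ : k - l.+1 < k); last by lia.
  by congr gcdn; rewrite (_ : k - (k - l.+1) = l.+1) ?mulnS; lia.
rewrite -{1}(add0n k) big_addn /gcd_prod_skip big_mkord.
apply: eq_bigr => -[m lt_m] _ /=; apply: eq_big_nat => j /andP[j_ge1 lt_jp].
by rewrite /abs_shift ltnNge leq_addl /= addnK; congr gcdn; lia.
Qed.

Lemma fact_Phin_dvdn p s n k : 0 < p -> k <= n ->
  (k`! * (n - k)`!) ^ (p - 1 + s) * Phin p n
  %| p ^ n * n`! ^ s * \prod_(1 <= j < p) \prod_(0 <= l < n) gcdn (abs_shift p k j l) (dn n).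
Proof.
move=> p_gt0 le_kn; rewrite prod_gcd_abs_shift //.
set K := k`! * (n - k)`!; set L := gcd_prod_skip _ _ k * gcd_prod_skip _ _ (n - k).
have K_gt0 : 0 < K by rewrite muln_gt0 !fact_gt0.
have KpPhi : K ^ (p - 1) * Phin p n * K %| p ^ n * L * K.
  rewrite mulnAC -expnSr subn1 prednK //.
  have -> : p ^ n = p ^ k * p ^ (n - k) by rewrite -expnD subnKC.
  apply: dvdn_trans (fact_Phin_dvdn_gcd_prod p le_kn) _.
  apply: dvdn_trans (dvdn_mul (gcd_prod_dvdn (dn n) k p_gt0)
                              (gcd_prod_dvdn (dn n) (n - k) p_gt0)) _.
  by apply/dvdnP; exists 1; rewrite mul1n /L /K; ring.
rewrite dvdn_pmul2r // in KpPhi.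
have Ks : K ^ s %| n`! ^ s by rewrite dvdn_exp2r // /K -(bin_fact le_kn) dvdn_mull.
have -> : K ^ (p - 1 + s) * Phin p n = K ^ s * (K ^ (p - 1) * Phin p n).
  by rewrite expnD; ring.
by rewrite [X in _ %| X]mulnAC [X in _ %| X]mulnC dvdn_mul.
Qed.

Lemma prod_dist_nat n k : k <= n ->
  \prod_(l < n.+1 | l != k :> nat) ((k - l) + (l - k)) = k`! * (n - k)`!.
Proof.
move=> le_kn; rewrite -(big_mkord (fun l => l != k) (fun l => (k - l) + (l - k))).
rewrite (big_cat_nat _ (n := k)) ?leqW //=; congr (_ * _).
  rewrite big_nat_cond (eq_bigl (fun l => (0 <= l < k) && true)) => [|l]; last first.
    by rewrite andbT; case: ltnP => // lt_lk; rewrite ltn_eqF.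
  rewrite -big_nat_cond big_nat_rev /= fact_prod big_add1 /=.
  by apply: eq_big_nat => l /andP[_ lt_lk]; lia.
rewrite big_ltn_cond // eqxx /= big_nat_cond.
rewrite (eq_bigl (fun l => (k.+1 <= l < n.+1) && true)) => [|l]; last first.
  by rewrite andbT; case/boolP: (_ <= _ < _) => //= /andP[lt_kl _]; rewrite gtn_eqF.
rewrite -big_nat_cond fact_prod -{1}(add1n k) big_addn subSn //.
by apply: eq_big_nat => l /andP[l_ge1 _]; lia.
Qed.

Section IntDilated.
Variable R : archiNumDomainType.
Local Open Scope ring_scope.
Implicit Types (d : R) (f g : {poly R}).

(* Equivalently, [f \Po (d *: 'X)] has integer coefficients. *)
Definition int_dilated d f := forall v, d ^+ v * f`_v \is a Num.int.

Lemma int_dilated1 d : int_dilated d 1.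
Proof. by case=> [|v]; rewrite coefC /= ?mulr1 ?mulr0 ?rpred1 ?rpred0. Qed.

Lemma int_dilatedM d f g : int_dilated d f -> int_dilated d g -> int_dilated d (f * g).
Proof.
move=> fd gd v; rewrite coefM mulr_sumr rpred_sum // => -[j lt_jv] _ /=.
rewrite -{1}(subnKC (ltnSE lt_jv)) exprD mulrACA.
exact: rpredM.
Qed.

Lemma int_dilated_prod d (I : Type) (r : seq I) (P : pred I) (F : I -> {poly R}) :
  (forall i, P i -> int_dilated d (F i)) -> int_dilated d (\prod_(i <- r | P i) F i).
Proof.
move=> Fd; elim: r => [|x r IHr]; first by rewrite big_nil; apply: int_dilated1.
by rewrite big_cons; case: ifP => // Px; apply: int_dilatedM => //; apply: Fd.
Qed.

Lemma int_dilatedX d f e : int_dilated d f -> int_dilated d (f ^+ e).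
Proof. by move=> fd; rewrite -[e]subn0 -prodr_const_nat; apply: int_dilated_prod. Qed.

Lemma int_dilatedZ d c f : c \is a Num.int -> int_dilated d f -> int_dilated d (c *: f).
Proof. by move=> c_int fd v; rewrite coefZ mulrCA rpredM. Qed.

Lemma int_dilated_linear d a b : a \is a Num.int -> d * b \is a Num.int ->
  int_dilated d (b *: 'X + a%:P).
Proof.
move=> a_int db_int [|[|v]]; rewrite coefD coefZ coefX coefC /=.
- by rewrite expr0 mul1r mulr0 add0r.
- by rewrite expr1 mulr1 addr0.
- by rewrite mulr0 addr0 mulr0 rpred0.
Qed.

Lemma int_dilated_quotient_coef d (h nu : {poly R}) (e : nat -> R) P :
  h`_0 = 1 -> int_dilated d h -> int_dilated d nu ->
  (forall m, (m < P)%N -> nu`_m = \sum_(w < m.+1) e w * h`_(m - w)) ->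
  forall m, (m < P)%N -> d ^+ m * e m \is a Num.int.
Proof.
move=> h0 hd nud nu_conv; elim/ltn_ind => m IHm lt_mP.
have -> : d ^+ m * e m = d ^+ m * nu`_m
    - \sum_(w < m) (d ^+ w * e w) * (d ^+ (m - w) * h`_(m - w)).
  rewrite nu_conv // big_ord_recr /= subnn h0 mulr1 mulrDr addrAC mulr_sumr.
  rewrite [X in _ - X](eq_bigr (fun w : 'I_m => d ^+ m * (e w * h`_(m - w)))).
    by rewrite subrr add0r.
  by move=> -[w lt_wm] _ /=; rewrite mulrACA -exprD subnKC // ltnW.
rewrite rpredB ?nud // rpred_sum // => -[w lt_wm] _ /=.
by rewrite rpredM ?hd ?IHm // (ltn_trans lt_wm).
Qed.

End IntDilated.

Local Open Scope ring_scope.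

(* Polynomials in x = t + k; [pole_factor k l] is t + l. *)
Definition pole_factor (k l : nat) : {poly rat} := 'X + (l%:R - k%:R)%:P.

Definition poch_cofactor (P n k : nat) : {poly rat} :=
  \prod_(l < n.+1 | l != k :> nat) pole_factor k l ^+ P.

Definition partial_term (P n k i k' : nat) : {poly rat} :=
  (\prod_(l < n.+1 | l != k' :> nat) pole_factor k l ^+ P) * pole_factor k k' ^+ (P - i).

Definition Rn_numer (p s n k : nat) : {poly rat} :=
  ((p ^ (p * n))%:R * (n`! ^ s)%:R) *:
  (('X - k%:R%:P) ^+ M0 p s *
   \prod_(1 <= j < p) \prod_(l < n) ('X + (l%:R + j%:R / p%:R - k%:R)%:P)).

Definition no_pole (n : nat) (t : rat) := forall k, (k <= n)%N -> t + k%:R != 0.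

Lemma horner_pole_factor k l t : (pole_factor k l).[t + k%:R] = t + l%:R.
Proof. by rewrite hornerD hornerX hornerC addrACA subrr addr0. Qed.

Lemma poch_neq0 n t : no_pole n t -> poch t n.+1 != 0.
Proof. by move=> t_ok; apply/prodf_neq0 => i _; apply: t_ok; rewrite -ltnS. Qed.

Lemma pochD1 n t k : (k <= n)%N ->
  poch t n.+1 = (t + k%:R) * \prod_(l < n.+1 | l != k :> nat) (t + l%:R).
Proof. by move=> le_kn; rewrite /poch (bigD1 (Ordinal (le_kn : (k < n.+1)%N))). Qed.

Lemma horner_partial_term P n k i k' t : (i <= P)%N -> (k' <= n)%N -> t + k'%:R != 0 ->
  (partial_term P n k i k').[t + k%:R] = poch t n.+1 ^+ P / (t + k'%:R) ^+ i.
Proof.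
move=> le_iP le_k'n tk'_neq0; rewrite hornerM horner_exp horner_prod horner_pole_factor.
rewrite (pochD1 t le_k'n) exprMn -[in (t + k'%:R) ^+ P](subnK le_iP) exprD.
under eq_bigr => l _ do rewrite horner_exp horner_pole_factor.
by rewrite prodrXl mulrAC mulfK ?expf_neq0 // mulrC.
Qed.

Lemma horner_Rn_numer p s n k t : no_pole n t ->
  (Rn_numer p s n k).[t + k%:R] = Rn p s n t * poch t n.+1 ^+ (p - 1 + s).
Proof.
move=> t_ok; rewrite /Rn divfK ?expf_neq0 ?poch_neq0 //.
rewrite hornerZ hornerM horner_exp hornerXsubC addrK horner_prod -!mulrA.
do 3 congr (_ * _); apply: eq_bigr => j _; rewrite horner_prod.
by apply: eq_bigr => l _; rewrite hornerD hornerX hornerC; ring.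
Qed.

Definition partial_fraction p s n (r : nat -> nat -> rat) :=
  forall t, no_pole n t ->
  Rn p s n t = \sum_(1 <= i < (p - 1 + s).+1) \sum_(1 <= k < n.+1) r i k / (t + k%:R) ^+ i.

(* Both sides agree at the infinitely many points x = T + 1 + k, T : nat. *)
Lemma Rn_numer_partial_fraction p s n k r : partial_fraction p s n r ->
  Rn_numer p s n k = \sum_(1 <= i < (p - 1 + s).+1) \sum_(1 <= k' < n.+1)
                       r i k' *: partial_term (p - 1 + s) n k i k'.
Proof.
move=> r_pf; apply/eqP; rewrite -subr_eq0; apply/eqP; set D := _ - _.
pose x (T : nat) : rat := T.+1%:R + k%:R.
apply: (@roots_geq_poly_eq0 _ _ [seq x T | T <- iota 0 (size D)]); last first.
- by rewrite size_map size_iota.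
- rewrite map_inj_uniq ?iota_uniq // => a b /addIr /eqP.
  by rewrite eqr_nat eqSS => /eqP.
apply/allP => _ /mapP[T _ ->]; rewrite /root.
have T_ok : no_pole n T.+1%:R by move=> k' _; rewrite -natrD pnatr_eq0.
rewrite /D hornerD hornerN horner_Rn_numer // (r_pf _ T_ok) mulr_suml subr_eq0.
apply/eqP; rewrite horner_sum; apply: eq_big_nat => i /andP[i_ge1 lt_iP].
rewrite horner_sum mulr_suml; apply: eq_big_nat => k' /andP[k'_ge1 lt_k'n].
rewrite hornerZ horner_partial_term ?T_ok ?(ltnSE lt_iP) ?(ltnSE lt_k'n) //.
by rewrite mulrAC -mulrA.
Qed.

Lemma pole_factor_kk k : pole_factor k k = 'X.
Proof. by rewrite /pole_factor subrr addr0. Qed.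

Lemma coef_partial_term_other P n k i k' m : (k <= n)%N -> k' != k -> (m < P)%N ->
  (partial_term P n k i k')`_m = 0.
Proof.
move=> le_kn ne_k'k lt_mP; rewrite /partial_term.
rewrite (bigD1 (Ordinal (le_kn : (k < n.+1)%N))) 1?eq_sym //=.
by rewrite pole_factor_kk -!mulrA coefXnM lt_mP.
Qed.

Lemma coef_partial_term_same P n k i m :
  (partial_term P n k i k)`_m =
  if (m < P - i)%N then 0 else (poch_cofactor P n k)`_(m - (P - i)).
Proof. by rewrite /partial_term pole_factor_kk coefMXn. Qed.

Lemma coef_Rn_numer_low p s n k r : (1 <= k <= n)%N -> partial_fraction p s n r ->
  forall m, (m < p - 1 + s)%N ->
  (Rn_numer p s n k)`_m =
  \sum_(w < m.+1) r (p - 1 + s - w)%N k * (poch_cofactor (p - 1 + s) n k)`_(m - w).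
Proof.
move=> /andP[k_ge1 le_kn] r_pf m; set P := (p - 1 + s)%N => lt_mP.
rewrite (Rn_numer_partial_fraction k r_pf) coef_sum.
under eq_big_nat => i /andP[i_ge1 lt_iP].
  rewrite coef_sum (bigD1_seq k) ?iota_uniq ?mem_index_iota ?k_ge1 ?ltnS //=.
  rewrite big1 => [|k' ne_k'k]; last by rewrite coefZ coef_partial_term_other ?mulr0.
  rewrite addr0 coefZ coef_partial_term_same.
over.
rewrite big_add1 /= big_nat_rev /= add0n -/P.
rewrite (eq_big_nat _ _ (F2 := fun w =>
    r (P - w)%N k * if (m < w)%N then 0 else (poch_cofactor P n k)`_(m - w))); last first.
  by move=> w /andP[_ lt_wP]; rewrite subnSK // subKn // ltnW.
rewrite (big_cat_nat _ (n := m.+1)) //= [X in _ + X]big1_seq ?addr0 => [|w]; last first.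
  by rewrite mem_index_iota => /andP[_ /andP[lt_mw _]]; rewrite lt_mw mulr0.
by rewrite big_mkord; apply: eq_bigr => -[w lt_wm] /=; rewrite ltnNge -ltnS lt_wm.
Qed.

Lemma natr_sub_sign (R : pzRingType) (k l : nat) :
  l%:R - k%:R = (-1) ^+ (l < k)%N * ((k - l) + (l - k))%:R :> R.
Proof.
case: ltnP => [lt_lk|le_kl].
  have /eqP -> : (l - k == 0)%N by rewrite subn_eq0 ltnW.
  by rewrite addn0 mulN1r natrB ?opprB // ltnW.
have /eqP -> : (k - l == 0)%N by rewrite subn_eq0.
by rewrite add0n mul1r natrB.
Qed.

Lemma coef0_poch_cofactor P n k : (k <= n)%N ->
  (poch_cofactor P n k)`_0 =
  ((-1) ^+ (\sum_(l < n.+1 | l != k :> nat) (l < k)%N) * (k`! * (n - k)`!)%:R) ^+ P.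
Proof.
move=> le_kn; rewrite -horner_coef0 horner_prod -prod_dist_nat // natr_prod -prodrXr.
rewrite -big_split -prodrXl /=; apply: eq_bigr => l _.
by rewrite horner_exp hornerD hornerX hornerC add0r natr_sub_sign.
Qed.

Lemma coef0_poch_cofactor_neq0 P n k : (poch_cofactor P n k)`_0 != 0.
Proof.
rewrite -horner_coef0 horner_prod; apply/prodf_neq0 => l ne_lk.
by rewrite horner_exp expf_neq0 // hornerD hornerX hornerC add0r subr_eq0 eqr_nat.
Qed.

Lemma int_ratio_dvdn (R : archiNumFieldType) a b : (0 < b)%N -> (b %| a)%N ->
  (a%:R / b%:R : R) \is a Num.int.
Proof. by move=> b_gt0 /dvdnP[c ->]; rewrite natrM mulfK ?rpred_nat // pnatr_eq0 -lt0n. Qed.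

Lemma int_dn_div_sub n k l : (l <= n)%N -> (k <= n)%N -> l != k ->
  (dn n)%:R / (l%:R - k%:R : rat) \is a Num.int.
Proof.
move=> le_ln le_kn ne_lk; rewrite natr_sub_sign invfM invr_sign mulrCA rpredM ?rpred_sign //.
by apply: int_ratio_dvdn; [|apply: dvdn_dn]; lia.
Qed.

Lemma int_dilated_cofactor P n k : (k <= n)%N ->
  int_dilated (dn n)%:R (((poch_cofactor P n k)`_0)^-1 *: poch_cofactor P n k).
Proof.
move=> le_kn; rewrite -horner_coef0 horner_prod -prodfV -scaler_prod.
apply: int_dilated_prod => l ne_lk; rewrite horner_exp -exprVn -exprZn.
apply: int_dilatedX; rewrite hornerD hornerX hornerC add0r scalerDr scale_polyC.
rewrite mulVf ?subr_eq0 ?eqr_nat //; apply: int_dilated_linear; first exact: rpred1.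
by apply: int_dn_div_sub; rewrite // -ltnS.
Qed.

Definition reduced_factor p n k j l : {poly rat} :=
  (p%:R / (gcdn (abs_shift p k j l) (dn n))%:R) *: 'X +
  ((j%:R + p%:R * (l%:R - k%:R)) / (gcdn (abs_shift p k j l) (dn n))%:R)%:P.

Lemma gcd_abs_shift_gt0 p n k j l : (0 < gcdn (abs_shift p k j l) (dn n))%N.
Proof. by rewrite gcdn_gt0 dn_gt0 orbT. Qed.

Lemma shift_factor_reduced p n k j l : (0 < p)%N ->
  'X + (l%:R + j%:R / p%:R - k%:R)%:P =
  ((gcdn (abs_shift p k j l) (dn n))%:R / p%:R) *: reduced_factor p n k j l.
Proof.
move=> p_gt0; set g := (gcdn _ _)%:R.
have g_neq0 : g != 0 by rewrite pnatr_eq0 -lt0n gcd_abs_shift_gt0.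
have p_neq0 : p%:R != 0 :> rat by rewrite pnatr_eq0 -lt0n.
rewrite scalerDr scalerA scale_polyC (_ : g / p%:R * (p%:R / g) = 1) ?scale1r.
  by congr (_ + _%:P); field; apply/andP.
by field; apply/andP.
Qed.

Lemma abs_shift_sign p k j l : (j < p)%N ->
  j%:R + p%:R * (l%:R - k%:R) = (-1) ^+ (l < k)%N * (abs_shift p k j l)%:R :> rat.
Proof.
move=> lt_jp; rewrite /abs_shift; case: ltnP => [lt_lk|le_kl].
  have le_j : (j <= p * (k - l))%N by rewrite (leq_trans (ltnW lt_jp)) ?leq_pmulr ?subn_gt0.
  by rewrite natrB // natrM natrB ?(ltnW lt_lk) //; ring.
by rewrite natrD natrM natrB //; ring.
Qed.

Lemma int_dilated_reduced_factor p n k j l : (j < p)%N ->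
  int_dilated (dn n)%:R (reduced_factor p n k j l).
Proof.
move=> lt_jp; have g_gt0 := gcd_abs_shift_gt0 p n k j l.
apply: int_dilated_linear.
  by rewrite abs_shift_sign // -mulrA rpredM ?rpred_sign ?int_ratio_dvdn ?dvdn_gcdl.
by rewrite mulrCA rpredM ?rpred_nat ?int_ratio_dvdn ?dvdn_gcdr.
Qed.

Lemma Rn_numer_reduced p s n k : (0 < p)%N ->
  Rn_numer p s n k =
  (p ^ n * n`! ^ s * \prod_(1 <= j < p) \prod_(0 <= l < n) gcdn (abs_shift p k j l) (dn n))%:R
  *: (('X - k%:R%:P) ^+ M0 p s * \prod_(1 <= j < p) \prod_(l < n) reduced_factor p n k j l).
Proof.
move=> p_gt0; have p_neq0 : p%:R != 0 :> rat by rewrite pnatr_eq0 -lt0n.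
rewrite /Rn_numer; under eq_bigr => j _ do
  under eq_bigr => l _ do rewrite (shift_factor_reduced n k j l p_gt0).
under eq_bigr => j _ do rewrite scaler_prod.
rewrite scaler_prod -scalerAr scalerA; congr (_ *: _).
under eq_bigr => j _ do rewrite big_split /= prodr_const card_ord.
rewrite big_split /= prodr_const_nat !natrM !natr_prod.
under [in RHS]eq_bigr => j _ do rewrite natr_prod big_mkord.
have p_pow : (p ^ (p * n))%:R * ((p%:R^-1) ^+ n) ^+ (p - 1) = (p ^ n)%:R :> rat.
  have -> : (p * n = n * (p - 1) + n)%N by rewrite mulnC -{1}(subnK p_gt0) mulnDr muln1.
  by rewrite -exprM !natrX exprVn exprD mulrAC mulfV ?mul1r // expf_neq0.
by rewrite -p_pow; ring.
Qed.

Lemma int_dilated_Rn_numer p s n k : (0 < p)%N -> (k <= n)%N ->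
  int_dilated (dn n)%:R
    (((poch_cofactor (p - 1 + s) n k)`_0 * (Phin p n)%:R)^-1 *: Rn_numer p s n k).
Proof.
move=> p_gt0 le_kn; rewrite Rn_numer_reduced // scalerA coef0_poch_cofactor //.
apply: int_dilatedZ.
  rewrite exprMn -natrX -mulrA invfM -exprVn invr_sign -mulrA rpredM ?rpredX ?rpred_sign //.
  rewrite -natrM mulrC int_ratio_dvdn ?fact_Phin_dvdn //.
  by rewrite muln_gt0 expn_gt0 muln_gt0 !fact_gt0 Phin_gt0.
apply: int_dilatedM.
  apply: int_dilatedX; rewrite -polyCN -(scale1r 'X).
  by apply: int_dilated_linear; rewrite ?rpredN ?mulr1 rpred_nat.
rewrite big_seq; apply: int_dilated_prod => j; rewrite mem_index_iota => /andP[_ lt_jp].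
by apply: int_dilated_prod => l _; apply: int_dilated_reduced_factor.
Qed.

Unset Implicit Arguments.

Theorem lemma5p4 (p s n : nat) (r : nat -> nat -> rat) :
  prime p -> (5 <= p)%N -> (0 < s)%N -> ((p + s) ^ 4 < n)%N ->
  (forall t : rat, (forall k : nat, (k <= n)%N -> t + k%:R != 0) ->
     Rn p s n t =
     \sum_(1 <= i < (p - 1 + s).+1) \sum_(1 <= k < n.+1) r i k / (t + k%:R) ^+ i) ->
  forall i k : nat, (1 <= i <= p - 1 + s)%N -> (1 <= k <= n)%N ->
    (dn n ^ (p - 1 + s - i))%:R * r i k / (Phin p n)%:R \is a Num.int.
Proof.
move=> p_pr _ _ _ r_pf i k /andP[i_ge1 le_iP] k_range.
have p_gt0 := prime_gt0 p_pr; have /andP[_ le_kn] := k_range.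
set P := (p - 1 + s)%N in le_iP *; set H := poch_cofactor P n k.
have H0_neq0 : H`_0 != 0 := coef0_poch_cofactor_neq0 P n k.
have Phi_neq0 : (Phin p n)%:R != 0 :> rat by rewrite pnatr_eq0 -lt0n Phin_gt0.
have h0 : ((H`_0)^-1 *: H)`_0 = 1 by rewrite coefZ mulVf.
have numer_conv m : (m < P)%N ->
    ((H`_0 * (Phin p n)%:R)^-1 *: Rn_numer p s n k)`_m =
    \sum_(w < m.+1) r (P - w)%N k / (Phin p n)%:R * ((H`_0)^-1 *: H)`_(m - w).
  move=> lt_mP; rewrite coefZ (coef_Rn_numer_low k_range r_pf lt_mP) mulr_sumr.
  by apply: eq_bigr => w _; rewrite coefZ; field; apply/andP.
have lt_P : (P - i < P)%N by rewrite ltn_subrL i_ge1 (leq_trans i_ge1 le_iP).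
have := int_dilated_quotient_coef (e := fun w => r (P - w)%N k / (Phin p n)%:R) h0
  (int_dilated_cofactor P le_kn)
  (int_dilated_Rn_numer s p_gt0 le_kn) numer_conv lt_P.
by rewrite subKn // natrX mulrA.
Qed.
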